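(* Consider the setting described in the context. Let $K\in[0,+\infty]$ and let $\zeta$ be a measurable function that is bounded from below on $[0,K]$; set $h=\zeta 1_{[0,K]}$ (restricted to $(0,\infty)$). Let $v>0$, and let $u=-vK/\hat s_0$ if $K<+\infty$, or $u$ be any real number if $K=+\infty$. Put $\hat\theta=\lambda\gamma(1-\rho^2)$, $\omega=W(\hat\theta v\eta^2T)$, $\hat K=K/\hat s_0$ and $\hat\zeta(x)=\zeta(\hat s_0x)$ for $x\ge 0$. Suppose $$\frac{\omega}{\eta^{2}T}+\frac{\omega^2}{2\eta^{2}T}\leq \frac{K}{s_0}\,\hat\theta\, v\, e^{-(\delta-\frac{\eta^2}{2})T}.$$ Then $p_h=D_{\zeta,K}+A_{\zeta,K}$, where $$D_{\zeta,K}=\lambda e^{-rT}u+\frac{e^{-rT}}{\gamma(1-\rho^2)}\left(\frac{\omega}{\eta^2T}+\frac{\omega^2}{2\eta^2T}\right),\qquad A_{\zeta,K}=-\frac{e^{-rT}}{\gamma(1-\rho^2)}\ln I,$$ with $$I=\mathbb{E}\left(\exp\left[-\hat\theta\left(\hat\zeta\left(\frac{\omega}{\hat\theta v\eta^2T}e^{\eta\sqrt{T}N}\right)-u-\frac{\omega}{\hat\theta\eta^2T}e^{\eta\sqrt{T}N}\right)1_{N\leq\frac{\ln\hat K}{\eta\sqrt T}+\frac{\omega}{\eta\sqrt T}}\right]\phi(N)\right),$$ $$\phi(y)=\exp\left(-\frac{\omega}{\eta^2T}\left(e^{\eta\sqrt Ty}-1-\eta\sqrt Ty\right)\right)\exp\left(\left(\frac{\omega}{\eta^2T}e^{\eta\sqrt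 Ty}-\hat\theta v\hat K\right)_+\right)$$ (conventions $\ln(+\infty)=+\infty$, $\ln 0=-\infty$, $(-\infty)_+=0$). Moreover, $V(x_0,s_0,\lambda,h)=V_D\,V_A$, where $$V_D=-\frac1\gamma\exp\left(-\gamma e^{rT}(x_0+D_{\zeta,K})-\frac{(\mu-r)^2}{2\sigma^2}T\right),\qquad V_A=\exp\left(-\gamma e^{rT}A_{\zeta,K}\right).$$
   Context: Fix $T>0$, $r\in\mathbb R$, $\nu,\mu\in\mathbb R$, $\eta>0$, $\sigma>0$, $\rho\in(-1,1)$, $s_0>0$, $\lambda>0$, risk aversion $\gamma>0$ and initial wealth $x_0\in\mathbb R$. Let $N$ be a standard Gaussian random variable. Set $\delta=\nu-\eta\rho\frac{\mu-r}{\sigma}$ and $\hat s_0=s_0e^{(\delta-\frac{\eta^2}{2})T}$. (Model: a non-traded asset $dS_t=S_t(\nu dt+\eta dZ_t)$, a traded asset $dP_t=P_t(\mu dt+\sigma dB_t)$ with $d\langle Z,B\rangle_t=\rho\,dt$, a bond with rate $r$, and an agent with utility $U(x)=-\frac1\gamma e^{-\gamma x}$ receiving $\lambda$ units of $h(S_T)$ at $T$.) For a measurable $h$ bounded from below on $(0,\infty)$, the value function (maximal expected utility) and the asking reservation price are given by $$V(x_0,s_0,\lambda,h)=-\frac1\gamma e^{-\gamma x_0e^{rT}-\frac{(\mu-r)^2}{2\sigma^2}T}\left(\mathbb E\exp\left(-\lambda\gamma(1-\rho^2)h(\hat s_0e^{\eta\sqrt TN})\right)\right)^{\frac1{1-\rho^2}},$$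 $$p_h=-\frac{e^{-rT}}{\gamma(1-\rho^2)}\ln\mathbb E\exp\left(-\lambda\gamma(1-\rho^2)h(\hat s_0e^{\eta\sqrt TN})\right).$$ $W$ denotes the Lambert function, the inverse of $x\in(-1,\infty)\mapsto xe^x\in(-1/e,\infty)$; $x_+=\max(x,0)$. *)

From HB Require Import structures.
From mathcomp Require Import all_boot all_order all_algebra.
From mathcomp Require Import all_classical all_reals all_analysis.
Set Implicit Arguments. Unset Strict Implicit. Unset Printing Implicit Defensive.
Import Order.TTheory GRing.Theory Num.Theory.
Local Open Scope classical_set_scope.
Local Open Scope ring_scope.

Section Defs.
Variable R : realType.

Definition LambertW (x : R) : R :=
  xget 0 [set w : R | -1 < w /\ w * expR w = x].

Definition gaussE (g : R -> R) : \bar R :=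
  (\int[normal_prob (0:R) 1]_(y in [set: R]) (g y)%:E)%E.

Definition x_pos (x : R) : R := Num.max x 0.

Definition delta_ (nu eta rho mu r sigma : R) : R := nu - eta * rho * (mu - r) / sigma.

Definition shat0 (s0 delta eta T : R) : R := s0 * expR ((delta - eta ^+ 2 / 2) * T).

Definition valueV (T r mu sigma eta rho gamma lambda x0 sh0 : R) (h : R -> R) : R :=
  - gamma^-1 * expR (- gamma * x0 * expR (r * T) - (mu - r) ^+ 2 / (2 * sigma ^+ 2) * T)
  * powR (fine (gaussE (fun y =>
       expR (- lambda * gamma * (1 - rho ^+ 2) * h (sh0 * expR (eta * Num.sqrt T * y))))))
      (1 - rho ^+ 2)^-1.

Definition priceP (T r eta rho gamma lambda sh0 : R) (h : R -> R) : R :=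
  - (expR (- r * T) / (gamma * (1 - rho ^+ 2)))
  * ln (fine (gaussE (fun y =>
       expR (- lambda * gamma * (1 - rho ^+ 2) * h (sh0 * expR (eta * Num.sqrt T * y)))))).

Definition h_trunc (zeta : R -> R) (K : \bar R) (x : R) : R :=
  if (x%:E <= K)%E then zeta x else 0.

(* the event {N <= ln(hatK)/(eta sqrt T) + omega/(eta sqrt T)}, with
   ln(+oo) = +oo, ln 0 = -oo, where hatK = K / hat s0 *)
Definition in_event (K : \bar R) (sh0 eta T omega y : R) : bool :=
  match K with
  | +oo%E => true
  | -oo%E => false
  | k%:E => (0 < k) && (y <= ln (k / sh0) / (eta * Num.sqrt T) + omega / (eta * Num.sqrt T))
  end.

(* (omega/(eta^2 T) e^{eta sqrt T y} - thetahat v hatK)_+ with (-oo)_+ = 0 *)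
Definition pos_part_term (K : \bar R) (sh0 eta T omega thetahat v y : R) : R :=
  match K with
  | k%:E => x_pos (omega / (eta ^+ 2 * T) * expR (eta * Num.sqrt T * y) - thetahat * v * (k / sh0))
  | _ => 0
  end.

End Defs.

(** Cameron-Martin: for [m = omega / (eta sqrt T)] and nonnegative measurable [g],
    [E g(N - m) exp (m N - m^2/2) = E g(N)].  Since [omega e^omega = thetahat v eta^2 T],
    the integrand of [I] is [exp (thetahat u + c) exp (m N - m^2/2)] times
    [exp (- thetahat h (shat0 e^(eta sqrt T (N - m))))]: on the event the linear term
    in [phi] cancels the one inside the indicator, and off the event the positive part
    reduces to it plus [thetahat u].  Hence
    [I = exp (thetahat u + c) E exp (- thetahat h (shat0 e^(eta sqrt T N)))], a positive
    finite number because [h] is bounded below, and both identities follow by taking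
    logarithms. *)

From mathcomp Require Import all_boot all_order all_algebra.
From mathcomp Require Import all_classical all_reals all_analysis.
From mathcomp Require Import measurable_realfun ring lra.
Import Order.TTheory GRing.Theory Num.Theory numFieldNormedType.Exports.
Import HBNNSimple.
Set Implicit Arguments.
Unset Strict Implicit.
Unset Printing Implicit Defensive.
Local Open Scope classical_set_scope.
Local Open Scope ring_scope.

Section normal_prob_density.
Local Open Scope ereal_scope.
Variables (R : realType) (m s : R).
Notation mu := (@lebesgue_measure R).
Notation P := (normal_prob m s).
Notation p := (normal_pdf m s).

Let integral_normal_prob_nnsfun (f : {nnsfun (measurableTypeR R) >-> R}) :
  \int[P]_x (f x)%:E = \int[mu]_x ((f x)%:E * (p x)%:E).
Proof.
under [LHS]eq_integral do rewrite fimfunE -fsumEFin//.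
rewrite [LHS]ge0_integral_fsum//; last 2 first.
  - by move=> r; exact/measurable_EFinP/measurableT_comp.
  - by move=> n x _; rewrite EFinM nnfun_muleindic_ge0.
under [RHS]eq_integral.
  move=> x _; rewrite fimfunE -fsumEFin// ge0_mule_fsuml; last first.
    by move=> r; rewrite EFinM nnfun_muleindic_ge0.
  over.
rewrite [RHS]ge0_integral_fsum//; last 2 first.
  - move=> r; apply: emeasurable_funM.
      by apply/measurable_EFinP; do 2 apply/measurableT_comp => //.
    by apply/measurable_EFinP; exact: measurable_normal_pdf.
  - move=> n x _; rewrite mule_ge0//; first by rewrite nnfun_muleindic_ge0.
    by rewrite lee_fin normal_pdf_ge0.
apply: eq_fsbigr => r /[!inE] -[x _ fxr].
have r0 : (0 <= r)%R by rewrite -fxr.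
have mfr : measurable (f @^-1` [set r]) by exact: measurable_sfunP.
rewrite integralZl_indic_nnsfun// integral_indic// setIT.
under eq_integral do rewrite EFinM -muleA.
rewrite ge0_integralZl//; last 2 first.
- apply: emeasurable_funM; apply/measurable_EFinP.
    exact: measurable_indic.
  exact: measurable_normal_pdf.
- by move=> y _; rewrite mule_ge0// lee_fin ?indicE// normal_pdf_ge0.
congr (_ * _).
transitivity (\int[mu]_(x in f @^-1` [set r]) (p x)%:E); first by [].
rewrite [LHS]integral_mkcond; apply: eq_integral => y _.
by rewrite /patch indicE; case: ifPn; rewrite ?mul1e ?mul0e.
Qed.

Lemma ge0_integral_normal_prob (f : R -> \bar R) :
  measurable_fun (T:=measurableTypeR R) [set: R] f -> (forall x, 0 <= f x) ->
  \int[P]_x f x = \int[mu]_x (f x * (p x)%:E).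
Proof.
move=> mf f0; pose f_ := nnsfun_approx measurableT mf.
have f_nd x : {homo (fun n => (f_ n x)%:E) : a b / (a <= b)%N >-> a <= b}.
  by move=> a b ab; rewrite lee_fin; exact/lefP/nd_nnsfun_approx.
transitivity (limn (fun n => \int[P]_x (f_ n x)%:E)).
  rewrite -monotone_convergence//=.
  - apply: eq_integral => x _; apply/esym/cvg_lim => //.
    exact: cvg_nnsfun_approx.
  - by move=> n; apply/measurable_EFinP; exact: (measurable_funP (f_ n)).
  - by move=> n x _; rewrite lee_fin.
transitivity (limn (fun n => \int[mu]_x ((f_ n x)%:E * (p x)%:E))).
  by apply: congr_lim; apply/funext => n /=; exact: integral_normal_prob_nnsfun.
rewrite -monotone_convergence//=.
- apply: eq_integral => x _; apply/cvg_lim => //.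
  by apply: cvgeZr => //; exact: cvg_nnsfun_approx.
- move=> n; apply: emeasurable_funM; apply/measurable_EFinP.
    exact: (measurable_funP (f_ n)).
  exact: measurable_normal_pdf.
- by move=> n x _; rewrite mule_ge0// lee_fin// normal_pdf_ge0.
- by move=> x _ a b ab; rewrite lee_wpmul2r ?lee_fin ?normal_pdf_ge0//; exact: f_nd.
Qed.

End normal_prob_density.

Lemma ge0_integral_lebesgue_shift (R : realType) (t : R) (f : R -> \bar R) :
  measurable_fun [set: R] f -> (forall x, (0 <= f x)%E) ->
  (\int[@lebesgue_measure R]_x f (x + t)%R = \int[@lebesgue_measure R]_x f x)%E.
Proof.
move=> mf f0.
have mshift : measurable_fun (T:=measurableTypeR R) (U:=measurableTypeR R)
    [set: R] (fun x : R => x + t).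
  by apply: measurable_funD => //; exact: measurable_id.
pose shifted := @pushforward _ _ (measurableTypeR R) (measurableTypeR R) R
  lebesgue_measure (fun x => x + t).
have shift_invariant := @lebesgue_measure_unique R shifted.
rewrite [RHS](eq_measure_integral shifted).
  by rewrite ge0_integral_pushforward.
move=> A mA _; apply: shift_invariant => // X /ocitvP [->|[[a b] /= ab ->]].
  by rewrite !measure0.
rewrite /shifted /pushforward (_ : _ @^-1` _ = `](a - t), (b - t)]%classic).
  rewrite !lebesgue_measure_itv /= !lte_fin ltrD2r ab /=.
  by rewrite -!EFinD; congr (_%:E); ring.
by apply/seteqP; split => x /=; rewrite !in_itv /= ltrBlDr lerBrDr.
Qed.

Lemma normal_pdf01_shift (R : realType) (m y : R) :
  expR (m * y - m ^+ 2 / 2) * normal_pdf 0 1 y = normal_pdf 0 1 (y - m).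
Proof.
rewrite /normal_pdf oner_eq0 /= /normal_fun mulrCA -expRD.
by congr (_ * expR _); rewrite expr1n; field.
Qed.

Lemma gaussE_shift (R : realType) (g : R -> R) (m : R) :
  measurable_fun (T:=measurableTypeR R) [set: R] g -> (forall x, 0 <= g x) ->
  gaussE (fun y => g (y - m) * expR (m * y - m ^+ 2 / 2)) = gaussE g.
Proof.
move=> mg g0; rewrite /gaussE.
have mgm : measurable_fun (T:=measurableTypeR R) [set: R] (fun y => g (y - m)).
  apply: measurableT_comp => //; apply: measurable_funB => //.
rewrite !ge0_integral_normal_prob; last 4 first.
- exact/measurable_EFinP.
- by move=> x; rewrite lee_fin.
- apply/measurable_EFinP; apply: (measurable_funM mgm).
  by apply: measurableT_comp => //; apply: measurable_funB.
- by move=> x; rewrite lee_fin mulr_ge0 ?expR_ge0.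
pose H z := ((g z)%:E * (normal_pdf 0 1 z)%:E)%E.
transitivity (\int[lebesgue_measure]_x H (x + - m)%R)%E.
  apply: eq_integral => y _; rewrite /H -!EFinM -normal_pdf01_shift.
  by congr (_%:E); ring.
apply: ge0_integral_lebesgue_shift.
- by apply: emeasurable_funM; apply/measurable_EFinP => //; exact: measurable_normal_pdf.
- by move=> x; rewrite /H mule_ge0 // lee_fin ?normal_pdf_ge0.
Qed.

Lemma gaussE_fin_gt0 (R : realType) (g : R -> R) (B : R) :
  measurable_fun (T:=measurableTypeR R) [set: R] g ->
  (forall y, 0 < g y) -> (forall y, g y <= B) ->
  exists2 G : R, 0 < G & gaussE g = G%:E.
Proof.
move=> mg g_gt0 g_le.
have mgE : measurable_fun (T:=measurableTypeR R) [set: R] (fun y => (g y)%:E).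
  exact/measurable_EFinP.
have PT : normal_prob (0 : R) 1 [set: R] = 1%E by exact: integral_normal_pdf.
have E_ge0 : (0 <= gaussE g)%E by apply: integral_ge0 => y _; rewrite lee_fin ltW.
have E_lt : (gaussE g < +oo)%E.
  apply: (@le_lt_trans _ _ B%:E); last exact: ltry.
  rewrite -[B%:E]mule1 -PT -integral_cst //.
  apply: ge0_le_integral => //.
  - by move=> y _; rewrite lee_fin ltW.
  - by move=> y _; rewrite lee_fin.
have E_fin : gaussE g \is a fin_num by rewrite ge0_fin_numE.
exists (fine (gaussE g)); last by rewrite fineK.
rewrite lt_neqAle fine_ge0 // andbT; apply/eqP => E0.
have {}E0 : gaussE g = 0%E by rewrite -(fineK E_fin) -E0.
have abs0 : (\int[normal_prob 0 1]_(y in [set: R]) `|(g y)%:E| = 0)%E.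
  rewrite -E0; apply: eq_integral => y _.
  by rewrite gee0_abs // lee_fin ltW.
have [N [mN N0 subN]] :=
  (@ae_eq_integral_abs _ _ _ (normal_prob 0 1) _ measurableT _ mgE).1 abs0.
have : (normal_prob 0 1 [set: R] <= normal_prob 0 1 N)%E.
  apply: le_measure; rewrite ?inE // => y _; apply: subN => /= /(_ Logic.I).
  by rewrite /cst => /eqP; rewrite eqe gt_eqF.
by rewrite PT N0 lee_fin ler10.
Qed.

Lemma LambertW_spec (R : realType) (x : R) : 0 < x ->
  0 < LambertW x /\ LambertW x * expR (LambertW x) = x.
Proof.
move=> x_gt0.
have root_ex : exists w : R, -1 < w /\ w * expR w = x.
  have [c] : exists2 c, c \in `[0, x] & c * expR c = x.
    apply: IVT; first exact: ltW.
      apply: continuous_subspaceT => w.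
      by apply: cvgM; [exact: cvg_id | exact: continuous_expR].
    rewrite mul0r ge_min ltW //= le_max; apply/orP; right.
    by rewrite ler_peMr ?ltW // expR_gt1.
  rewrite in_itv /= => /andP[c_ge0 _] c_eq; exists c; split => //.
  by apply: lt_le_trans c_ge0; rewrite ltrN10.
have [W_gt W_eq] := xgetPex 0 root_ex.
split => //; rewrite ltNge; apply/negP => W_le0.
have : LambertW x * expR (LambertW x) <= 0 by rewrite mulr_le0_ge0 ?expR_ge0.
by rewrite /LambertW W_eq leNgt x_gt0.
Qed.

Lemma measurable_h_trunc_spot (R : realType) (zeta : R -> R) (K : \bar R) (s a : R) :
  0 < s -> measurable_fun [set x : R | 0 <= x] zeta ->
  measurable_fun (T:=measurableTypeR R) [set: R]
    (fun y => h_trunc zeta K (s * expR (a * y))).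
Proof.
move=> s_gt0 mzeta.
have mspot : measurable_fun (T:=measurableTypeR R) [set: R] (fun y => s * expR (a * y)).
  by apply: measurable_funM => //; apply: measurableT_comp.
have mzeta_spot : measurable_fun (T:=measurableTypeR R) [set: R]
    (fun y => zeta (s * expR (a * y))).
  have mpos : measurable [set x : R | 0 <= x].
    rewrite (_ : [set x | 0 <= x] = `[0, +oo[%classic); first exact: measurable_itv.
    by apply/seteqP; split => x /=; rewrite in_itv /= andbT.
  apply: (measurable_comp mpos) => //.
  by move=> _ [y _ <-]; rewrite /= mulr_ge0 ?expR_ge0 ?ltW.
rewrite /h_trunc; case: K => [k| |].
- under eq_fun do rewrite lee_fin.
  by apply: measurable_fun_ifT => //; apply: measurable_fun_ler.
- by under eq_fun do rewrite leey.
- exact: measurable_cst. (* [x%:E <= -oo] computes to [false] *)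
Qed.

Lemma h_trunc_ge (R : realType) (zeta : R -> R) (K : \bar R) (m x : R) :
  (forall x, 0 <= x -> (x%:E <= K)%E -> m <= zeta x) -> 0 <= x ->
  Num.min m 0 <= h_trunc zeta K x.
Proof.
move=> zeta_ge x_ge0; rewrite /h_trunc ge_min.
by case: ifP => [xK|_]; rewrite ?zeta_ge ?lexx ?orbT.
Qed.

Section shifted_integrand.
Variables (R : realType) (T eta sh0 theta v u omega : R) (zeta : R -> R).
Variable K : \bar R.
Hypotheses (T_gt0 : 0 < T) (eta_gt0 : 0 < eta) (sh0_gt0 : 0 < sh0).
Hypotheses (theta_gt0 : 0 < theta) (v_gt0 : 0 < v).
Hypothesis omegaE : omega * expR omega = theta * v * eta ^+ 2 * T.
Hypothesis K_gt0 : (0 < K)%E.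
Hypothesis uE : forall k, K = k%:E -> u = - (v * k / sh0).
Hypothesis zeta_meas : measurable_fun [set x : R | 0 <= x] zeta.

Local Notation a := (eta * Num.sqrt T).
Local Notation m := (omega / a).
Local Notation c := (omega / (eta ^+ 2 * T) + omega ^+ 2 / (2 * eta ^+ 2 * T)).

Let a_gt0 : 0 < a. Proof. by rewrite mulr_gt0 ?sqrtr_gt0. Qed.
Let a2E : a ^+ 2 = eta ^+ 2 * T. Proof. by rewrite exprMn sqr_sqrtr ?ltW. Qed.

Let omega_gt0 : 0 < omega.
Proof.
have : 0 < omega * expR omega by rewrite omegaE !mulr_gt0 ?exprn_gt0.
by rewrite pmulr_lgt0 ?expR_gt0.
Qed.

Let ratioE : omega / (theta * v * eta ^+ 2 * T) = expR (- omega).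
Proof. by rewrite -omegaE expRN invfM mulrA divff ?mul1r // gt_eqF. Qed.

Let spotE y : sh0 * expR (a * (y - m)) = sh0 * (expR (- omega) * expR (a * y)).
Proof. by rewrite mulrBr mulrCA divff ?mulr1 ?gt_eqF // addrC -expRD. Qed.

Lemma in_event_spot k y : K = k%:E ->
  in_event K sh0 eta T omega y = (sh0 * expR (a * (y - m)) <= k).
Proof.
move=> Kk; have k_gt0 : 0 < k by rewrite -lte_fin -Kk.
rewrite Kk /= k_gt0 /= -ler_pdivlMl // [sh0^-1 * k]mulrC.
rewrite -[k / sh0]lnK ?posrE ?divr_gt0 // ler_expR.
by rewrite expRK [X in _ = (X <= _)]mulrC -ler_pdivlMr // lerBlDr.
Qed.

Let kappaE : omega / (eta ^+ 2 * T) = theta * v * expR (- omega).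
Proof. by rewrite -ratioE; field; rewrite !gt_eqF. Qed.

Lemma pos_part_term_spot k y : K = k%:E ->
  pos_part_term K sh0 eta T omega theta v y =
  theta * v / sh0 * x_pos (sh0 * expR (a * (y - m)) - k).
Proof.
move=> Kk; rewrite Kk /= /x_pos maxr_pMr ?divr_ge0 ?mulr_ge0 ?ltW // mulr0.
by congr Num.max; rewrite spotE kappaE; field; rewrite gt_eqF.
Qed.

Lemma shifted_integrandE y :
  expR (- theta * ((zeta (sh0 * (omega / (theta * v * eta ^+ 2 * T) * expR (a * y)))
                    - u - omega / (theta * eta ^+ 2 * T) * expR (a * y))
                   * (in_event K sh0 eta T omega y)%:R))
  * (expR (- (omega / (eta ^+ 2 * T)) * (expR (a * y) - 1 - a * y))
     * expR (pos_part_term K sh0 eta T omega theta v y))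
  = expR (theta * u + c)
    * (expR (- theta * h_trunc zeta K (sh0 * expR (a * (y - m))))
       * expR (m * y - m ^+ 2 / 2)).
Proof.
have m2E : m ^+ 2 / 2 = omega ^+ 2 / (2 * eta ^+ 2 * T).
  by rewrite -mulrA -a2E; field; rewrite !gt_eqF ?sqrtr_gt0.
have c2E : omega ^+ 2 / (2 * eta ^+ 2 * T) = theta * v * expR (- omega) * omega / 2.
  by rewrite -kappaE; field; rewrite !gt_eqF.
have mE : m = theta * v * expR (- omega) * a.
  by rewrite -kappaE -a2E; field; rewrite !gt_eqF ?sqrtr_gt0.
have ratio2E : omega / (theta * eta ^+ 2 * T) = v * expR (- omega).
  by rewrite -ratioE; field; rewrite !gt_eqF.
have [Kinf | [k Kk]] : K = +oo%E \/ exists k, K = k%:E.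
  by move: K_gt0; case: (K) => [k _|_|//]; [right; exists k | left].
- rewrite Kinf /h_trunc /= leey spotE m2E c2E mE kappaE ratio2E ratioE.
  by rewrite -!expRD; congr expR; ring.
rewrite (in_event_spot y Kk) (pos_part_term_spot y Kk) (uE Kk) /h_trunc Kk lee_fin.
rewrite spotE m2E c2E mE kappaE ratio2E ratioE /x_pos.
rewrite -!expRD; case: leP => spot_le /=; rewrite ?mulr1n ?mulr0n; congr expR.
- rewrite max_r ?subr_le0 //.
  by field; rewrite gt_eqF.
- rewrite max_l ?subr_ge0 ?ltW // expRD.
  by field; rewrite gt_eqF.
Qed.

Lemma gaussE_shifted_integrand :
  gaussE (fun y =>
    expR (- theta * ((zeta (sh0 * (omega / (theta * v * eta ^+ 2 * T) * expR (a * y)))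
                      - u - omega / (theta * eta ^+ 2 * T) * expR (a * y))
                     * (in_event K sh0 eta T omega y)%:R))
    * (expR (- (omega / (eta ^+ 2 * T)) * (expR (a * y) - 1 - a * y))
       * expR (pos_part_term K sh0 eta T omega theta v y)))
  = ((expR (theta * u + c))%:E
     * gaussE (fun y => expR (- theta * h_trunc zeta K (sh0 * expR (a * y)))))%E.
Proof.
have payoff_meas := measurable_h_trunc_spot K a sh0_gt0 zeta_meas.
transitivity (gaussE (fun y => expR (theta * u + c)
    * (expR (- theta * h_trunc zeta K (sh0 * expR (a * (y - m))))
       * expR (m * y - m ^+ 2 / 2)))).
  by congr gaussE; apply/funext => y; exact: shifted_integrandE.
rewrite -[in RHS](gaussE_shift m); last 2 first.
- by apply: measurableT_comp => //; apply: measurable_funM.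
- by move=> y; rewrite expR_ge0.
rewrite /gaussE; under eq_integral do rewrite EFinM.
apply: ge0_integralZl => //; apply/measurable_EFinP; apply: measurable_funM.
  apply: measurableT_comp => //; apply: measurable_funM => //.
  by apply: (measurable_comp _ _ payoff_meas) => //; apply: measurable_funB.
by apply: measurableT_comp => //; apply: measurable_funB.
Qed.

End shifted_integrand.

Theorem theorem2 (R : realType)
  (T r nu mu eta sigma rho s0 lambda gamma x0 : R)
  (hT : 0 < T) (heta : 0 < eta) (hsigma : 0 < sigma)
  (hrho1 : -1 < rho) (hrho2 : rho < 1) (hs0 : 0 < s0)
  (hlambda : 0 < lambda) (hgamma : 0 < gamma)
  (K : \bar R) (hK : (0 <= K)%E)
  (zeta : R -> R)
  (hzeta_meas : measurable_fun [set x : R | 0 <= x] zeta)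
  (hzeta_bdd : exists m : R, forall x : R, 0 <= x -> (x%:E <= K)%E -> m <= zeta x)
  (v u : R) (hv : 0 < v)
  (hu : forall k : R, K = k%:E ->
          u = - (v * k / shat0 s0 (delta_ nu eta rho mu r sigma) eta T)) :
  let delta := delta_ nu eta rho mu r sigma in
  let sh0 := shat0 s0 delta eta T in
  let h := h_trunc zeta K in
  let thetahat := lambda * gamma * (1 - rho ^+ 2) in
  let omega := LambertW (thetahat * v * eta ^+ 2 * T) in
  let zetahat := fun x : R => zeta (sh0 * x) in
  let c := omega / (eta ^+ 2 * T) + omega ^+ 2 / (2 * eta ^+ 2 * T) in
  (c%:E <= K * (thetahat * v * expR (- ((delta - eta ^+ 2 / 2) * T)) / s0)%:E)%E ->
  let D := lambda * expR (- r * T) * u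
           + expR (- r * T) / (gamma * (1 - rho ^+ 2)) * c in
  let phi := fun y : R =>
    expR (- (omega / (eta ^+ 2 * T))
            * (expR (eta * Num.sqrt T * y) - 1 - eta * Num.sqrt T * y))
    * expR (pos_part_term K sh0 eta T omega thetahat v y) in
  let I := fine (gaussE (fun y : R =>
    expR (- thetahat
            * ((zetahat (omega / (thetahat * v * eta ^+ 2 * T)
                           * expR (eta * Num.sqrt T * y))
                - u
                - omega / (thetahat * eta ^+ 2 * T) * expR (eta * Num.sqrt T * y))
               * (in_event K sh0 eta T omega y)%:R))
    * phi y)) in
  let A := - (expR (- r * T) / (gamma * (1 - rho ^+ 2))) * ln I in
  priceP T r eta rho gamma lambda sh0 h = D + A /\
  valueV T r mu sigma eta rho gamma lambda x0 sh0 h =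
    (- gamma^-1 * expR (- gamma * expR (r * T) * (x0 + D)
                        - (mu - r) ^+ 2 / (2 * sigma ^+ 2) * T))
    * expR (- gamma * expR (r * T) * A).
Proof.
move=> delta sh0 h thetahat omega zetahat c Hc D phi I A.
have rho2_gt0 : 0 < 1 - rho ^+ 2 by nra.
have theta_gt0 : 0 < thetahat by rewrite !mulr_gt0.
have sh0_gt0 : 0 < sh0 by rewrite mulr_gt0 ?expR_gt0.
have [omega_gt0 omegaE] : 0 < omega /\ omega * expR omega = thetahat * v * eta ^+ 2 * T.
  by apply: LambertW_spec; rewrite !mulr_gt0 ?exprn_gt0.
(* the hypothesis on [c] is only needed to exclude [K = 0] *)
have K_gt0 : (0 < K)%E.
  rewrite lt_neqAle hK andbT; apply: contraTneq Hc => <-.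
  by rewrite mul0e lee_fin -ltNge !addr_gt0 ?divr_gt0 ?mulr_gt0 ?exprn_gt0.
pose g y := expR (- thetahat * h (sh0 * expR (eta * Num.sqrt T * y))).
have gE : (fun y => expR (- lambda * gamma * (1 - rho ^+ 2)
                          * h (sh0 * expR (eta * Num.sqrt T * y)))) = g.
  by apply/funext => y; rewrite /g !mulNr.
have [m0 zeta_ge] := hzeta_bdd.
have [G G_gt0 GE] : exists2 G, 0 < G & gaussE g = G%:E.
  apply: (gaussE_fin_gt0 (B := expR (- thetahat * Num.min m0 0))).
  - apply: measurableT_comp => //; apply: measurable_funM => //.
    exact: measurable_h_trunc_spot.
  - by move=> y; rewrite expR_gt0.
  - move=> y; rewrite ler_expR !mulNr lerN2 ler_pM2l //.
    by apply: h_trunc_ge zeta_ge _; rewrite mulr_ge0 ?expR_ge0 ?ltW.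
have lnIE : ln I = thetahat * u + c + ln G.
  by rewrite /I gaussE_shifted_integrand // GE /= lnM ?posrE ?expR_gt0 // expRK.
have priceE : priceP T r eta rho gamma lambda sh0 h = D + A.
  rewrite /priceP gE GE /A lnIE /D /thetahat.
  by field; rewrite !gt_eqF.
split => //; rewrite /valueV gE GE /= /powR gt_eqF //.
rewrite -!mulrA -!expRD; congr (_ * expR _).
rewrite /A lnIE /D /thetahat (mulNr r T) expRN.
by field; rewrite !gt_eqF ?expR_gt0.
Qed.
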